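(* Let $\sigma$ be a pre-weight function and $\mathfrak{M}_\sigma=\{S^{(x)}:x>0\}$ its associated weight matrix. For $k\in\mathbb{N}_{\ge1}$ let $\Lambda^k=\{a\in\mathbb{C}^{\mathbb{N}}:\sup_{j\in\mathbb{N}}|a_j|/(k^jS^{(k)}_j)<\infty\}$, a Banach space with this supremum as norm. Then the inclusion $\Lambda^k\hookrightarrow\Lambda^{k+1}$ is compact. In particular, $\Lambda^{\{\mathfrak{M}_\sigma\}}=\operatorname{ind}_{k}\Lambda^k$ (the inductive limit) is a (DFS)-space.
   Context: A pre-weight function is a continuous increasing $\sigma:[0,\infty)\to[0,\infty)$ with $\sigma(0)=0$, $\sigma(t)\to\infty$, $\log t=o(\sigma(t))$, $t\mapsto\sigma(e^t)$ convex. $\varphi^*_\sigma(x)=\sup_{y\ge0}(xy-\sigma(e^y))$, and $S^{(x)}_j=\exp(\frac1x\varphi^*_\sigma(xj))$. A (DFS)-space is a countable inductive limit of Banach spaces with compact connecting maps. *)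

From HB Require Import structures.
From mathcomp Require Import all_boot all_order all_algebra.
From mathcomp Require Import all_classical all_reals all_analysis.
From mathcomp Require Import complex.
Set Implicit Arguments. Unset Strict Implicit. Unset Printing Implicit Defensive.
Import Order.TTheory GRing.Theory Num.Theory.
Import numFieldNormedType.Exports.
Local Open Scope classical_set_scope.
Local Open Scope ring_scope.

Definition cabs (R : realType) (z : R[i]) : R :=
  Num.sqrt (complex.Re z ^+ 2 + complex.Im z ^+ 2).

(* pre-weight function sigma : [0,oo) -> [0,oo) (only values on [0,oo) matter) *)
Definition pre_weight (R : realType) (sigma : R -> R) : Prop :=
  {within `[(0:R), +oo[, continuous sigma} /\
      (forall t, 0 <= t -> 0 <= sigma t) /\
      (forall s t, 0 <= s -> s <= t -> sigma s <= sigma t) /\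
      sigma 0 = 0 /\
      (sigma x @[x --> +oo] --> +oo) /\
      ((fun t => ln t / sigma t) x @[x --> +oo] --> (0 : R)) /\
      (forall (s t l : R), 0 <= l <= 1 ->
         sigma (expR (l * s + (1 - l) * t))
           <= l * sigma (expR s) + (1 - l) * sigma (expR t)).

Definition phistar (R : realType) (sigma : R -> R) (x : R) : R :=
  sup [set x * y - sigma (expR y) | y in [set y : R | 0 <= y]].

Definition Sw (R : realType) (sigma : R -> R) (x : R) (j : nat) : R :=
  expR (x^-1 * phistar sigma (x * j%:R)).

Definition wq (R : realType) (sigma : R -> R) (k : nat) (a : nat -> R[i])
  (j : nat) : R :=
  cabs (a j) / ((k%:R) ^+ j * Sw sigma k%:R j).

Definition Lambda (R : realType) (sigma : R -> R) (k : nat) : set (nat -> R[i]) :=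
  [set a | exists M : R, forall j, wq sigma k a j <= M].

Definition Lnorm_k (R : realType) (sigma : R -> R) (k : nat) (a : nat -> R[i]) : R :=
  sup (range (wq sigma k a)).

Definition complete_in (R : realType) (X : set (nat -> R[i]))
  (N : (nat -> R[i]) -> R) : Prop :=
  forall u : nat -> (nat -> R[i]), (forall n, X (u n)) ->
    (forall e : R, 0 < e -> exists n0, forall m n, (n0 <= m)%N -> (n0 <= n)%N ->
        N (u m - u n) < e) ->
    exists2 b, X b & (fun n => N (u n - b)) @ \oo --> (0 : R).

(* the inclusion (X,NX) -> (Y,NY) is a compact linear map: X is contained in Y,
   and the image of the closed unit ball of X is relatively compact in Y,
   i.e. every sequence in the unit ball of X has a subsequence converging in
   (Y, NY) to an element of Y. *)
Definition compact_inclusion (R : realType) (X Y : set (nat -> R[i]))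
  (NX NY : (nat -> R[i]) -> R) : Prop :=
  X `<=` Y /\
  forall u : nat -> (nat -> R[i]), (forall n, X (u n) /\ NX (u n) <= 1) ->
    exists phi : nat -> nat, {homo phi : m n / (m < n)%N >-> (m < n)%N} /\
      exists2 b, Y b & (fun n => NY (u (phi n) - b)) @ \oo --> (0 : R).

(* (DFS)-space: countable inductive limit of the Banach spaces
   (X k, N k), k >= 1, with compact connecting maps X k -> X (k+1). *)
Definition DFS_spectrum (R : realType) (X : nat -> set (nat -> R[i]))
  (N : nat -> (nat -> R[i]) -> R) : Prop :=
  forall k, (1 <= k)%N ->
    complete_in (X k) (N k) /\ compact_inclusion (X k) (X k.+1) (N k) (N k.+1).

(* The weights w_k(j) = k^j S^(k)_j satisfy w_k(j) (k + j) <= k w_(k+1)(j):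
   S^(k) <= S^(k+1) because phi*(x j)/x = sup_(y >= 0) (j y - sigma(e^y)/x)
   increases with x, and k^j (k + j) <= k (k+1)^j is Bernoulli's inequality.
   Hence on the unit ball of Lambda^k the Lambda^(k+1)-quotients of index
   j > m are O(1/m), uniformly. A subsequence converging coordinatewise, which
   Tychonoff's theorem provides on the product of the discs |a_j| <= w_k(j),
   therefore converges in Lambda^(k+1). *)

From HB Require Import structures.
From mathcomp Require Import all_boot all_order all_algebra.
From mathcomp Require Import all_classical all_reals all_analysis.
From mathcomp Require Import complex.
From mathcomp.algebra_tactics Require Import ring lra.
From mathcomp Require Import zify.
Set Implicit Arguments. Unset Strict Implicit. Unset Printing Implicit Defensive.
Import Order.TTheory GRing.Theory Num.Theory.
Import numFieldNormedType.Exports.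
Local Open Scope classical_set_scope.
Local Open Scope ring_scope.

Section complex_modulus.
Variable R : realType.
Implicit Types z : R[i].

Lemma cabs_ge0 z : 0 <= cabs z.
Proof. exact: sqrtr_ge0. Qed.

Lemma Re_le_cabs z : `|complex.Re z| <= cabs z.
Proof. by rewrite /cabs -sqrtr_sqr ler_wsqrtr // lerDl sqr_ge0. Qed.

Lemma Im_le_cabs z : `|complex.Im z| <= cabs z.
Proof. by rewrite /cabs -sqrtr_sqr ler_wsqrtr // lerDr sqr_ge0. Qed.

Lemma cabs_le_ReIm z : cabs z <= `|complex.Re z| + `|complex.Im z|.
Proof.
rewrite /cabs -[leRHS]ger0_norm ?addr_ge0 // -sqrtr_sqr ler_wsqrtr //.
rewrite -[complex.Re z ^+ 2]real_normK ?num_real //.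
rewrite -[complex.Im z ^+ 2]real_normK ?num_real //.
have := normr_ge0 (complex.Re z); have := normr_ge0 (complex.Im z); nra.
Qed.

Lemma cabsB_le (z w : R[i]) : cabs (z - w) <= 2 * cabs z + 2 * cabs w.
Proof.
apply: le_trans (cabs_le_ReIm _) _.
have -> : complex.Re (z - w) = complex.Re z - complex.Re w by case: z w => ? ? [].
have -> : complex.Im (z - w) = complex.Im z - complex.Im w by case: z w => ? ? [].
have := ler_normB (complex.Re z) (complex.Re w).
have := ler_normB (complex.Im z) (complex.Im w).
have := Re_le_cabs z; have := Re_le_cabs w; have := Im_le_cabs z; have := Im_le_cabs w.
lra.
Qed.

End complex_modulus.

Section real_imaginary_coordinates.
Context {R : realType}.
Implicit Types (a c : nat -> R[i]) (f : nat * bool -> R).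

(* Tychonoff's theorem is applied in the product of real lines indexed by
   nat * bool: (j, true) carries Re a_j and (j, false) carries Im a_j. *)
Definition reim a (i : nat * bool) : R :=
  if i.2 then complex.Re (a i.1) else complex.Im (a i.1).

Definition of_reim f (j : nat) : R[i] := (f (j, true) +i* f (j, false))%C.

Lemma reim_le_cabs a i : `|reim a i| <= cabs (a i.1).
Proof. by rewrite /reim; case: ifP => _; [exact: Re_le_cabs | exact: Im_le_cabs]. Qed.

Lemma reimB a c i : reim (a - c) i = reim a i - reim c i.
Proof.
rewrite /reim; have -> : (a - c) i.1 = a i.1 - c i.1 by [].
by case: (a i.1) (c i.1) => [? ?] [? ?]; case: ifP.
Qed.

Lemma cabs_of_reim_le f j : cabs (of_reim f j) <= `|f (j, true)| + `|f (j, false)|.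
Proof. exact: cabs_le_ReIm. Qed.

Lemma cabs_sub_of_reim_le a f j :
  cabs (a j - of_reim f j) <=
    `|reim a (j, true) - f (j, true)| + `|reim a (j, false) - f (j, false)|.
Proof. by apply: le_trans (cabs_le_ReIm _) _; rewrite /reim /=; case: (a j). Qed.

End real_imaginary_coordinates.

Lemma cluster_subseq (T : topologicalType) (v : nat -> T) (b : T) (U : nat -> set T) :
  cluster (v @ \oo) b -> (forall m, nbhs b (U m)) ->
  exists2 phi : nat -> nat,
    {homo phi : m n / (m < n)%N >-> (m < n)%N} & forall m, U m (v (phi m)).
Proof.
move=> bv bU.
have next m N : exists n, (N <= n)%N /\ U m (v n).
  have vN : (v @ \oo) [set v n | n in [set n | (N <= n)%N]].
    by exists N => // n /= Nn; exists n.
  by have [_ [[n Nn <-] Uvn]] := bv _ _ vN (bU m); exists n.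
pose g m N := proj1_sig (cid (next m N)).
have gP m N : (N <= g m N)%N /\ U m (v (g m N)) := proj2_sig (cid (next m N)).
pose phi := fix phi m := if m is m'.+1 then g m (phi m').+1 else g 0%N 0%N.
exists phi; last by case=> [|m]; exact: (proj2 (gP _ _)).
apply: homo_ltn => [y x z|m]; [exact: ltn_trans | exact: (proj1 (gP m.+1 _))].
Qed.

Section product_of_lines.
Variables (R : realType) (I : eqType).
Local Notation RI := (prod_topology (fun _ : I => R)).

Lemma nbhs_coord (b : RI) i e : 0 < e -> \forall f \near b, `|b i - f i| < e.
Proof.
move=> e0; have := @proj_continuous _ (fun _ : I => R) i b.
by move=> /(_ _ (nbhsx_ballx (b i) e e0)).
Qed.

Lemma compact_box (w : I -> R) : compact [set f : RI | forall i, `|f i| <= w i].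
Proof.
have -> : [set f : RI | forall i, `|f i| <= w i] =
          [set f : RI | forall i, `[- w i, w i]%classic (f i)].
  by rewrite predeqE => f; split => hf i; have := hf i; rewrite /= in_itv /= ler_norml.
exact: (@tychonoff I (fun=> R) _ (fun i => @segment_compact R _ _)).
Qed.

End product_of_lines.

Lemma nbhs_box (R : realType) (b : prod_topology (fun _ : nat * bool => R))
    (eps : nat -> R) (m : nat) : (forall j, 0 < eps j) ->
  \forall f \near b, forall j bo, (j <= m)%N -> `|b (j, bo) - f (j, bo)| < eps j.
Proof.
move=> eps_gt0.
have box := @filter_forall _ ('I_m.+1 * bool)%type
  (fun i f => `|b (val i.1, i.2) - f (val i.1, i.2)| < eps i.1) _ (nbhs_filter b)
  (fun i => nbhs_coord b (val i.1, i.2) (eps_gt0 i.1)).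
by apply: filterS box => f bf j bo jm; exact: (bf (@Ordinal m.+1 j jm, bo)).
Qed.

Lemma dominated_subseq_reim_near (R : realType) (u : nat -> nat -> R[i])
    (w eps : nat -> R) :
  (forall n j, cabs (u n j) <= w j) -> (forall j, 0 < eps j) ->
  exists2 phi : nat -> nat, {homo phi : m n / (m < n)%N >-> (m < n)%N} &
    exists2 c : nat * bool -> R, (forall i, `|c i| <= w i.1) &
      forall m j bo, (j <= m)%N ->
        `|reim (u (phi m)) (j, bo) - c (j, bo)| <= eps j / m.+1%:R.
Proof.
move=> u_le eps_gt0.
pose v n : prod_topology (fun=> R) := reim (u n).
have v_box : (v @ \oo) [set f | forall i, `|f i| <= w i.1].
  by exists 0%N => // n _ i; exact: le_trans (reim_le_cabs _ _) (u_le n i.1).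
have [b [b_box b_cluster]] := compact_box _ v_box.
have [phi phi_incr u_near_b] := cluster_subseq b_cluster (fun m =>
  nbhs_box b m (fun j => divr_gt0 (eps_gt0 j) (ltr0Sn R m))).
exists phi => //; exists b => // m j bo jm.
by rewrite distrC; exact: ltW (u_near_b m j bo jm).
Qed.

Section weighted_sequences.
Variables (R : realType) (sigma : R -> R).
Implicit Types (a c : nat -> R[i]) (k j : nat).

Definition weight k j : R := k%:R ^+ j * Sw sigma k%:R j.

Lemma weight_gt0 k j : (0 < k)%N -> 0 < weight k j.
Proof. by move=> k0; rewrite mulr_gt0 ?expR_gt0 // exprn_gt0 // ltr0n. Qed.

Lemma wq_ge0 k a j : 0 <= wq sigma k a j.
Proof. by rewrite divr_ge0 ?cabs_ge0 // mulr_ge0 ?exprn_ge0 ?ler0n // expR_ge0. Qed.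

Lemma wq_leE k a j M : (0 < k)%N ->
  (wq sigma k a j <= M) = (cabs (a j) <= M * weight k j).
Proof. by move=> k0; rewrite ler_pdivrMr ?weight_gt0. Qed.

Lemma Lambda_cabs_le k a M : (0 < k)%N ->
  (forall j, cabs (a j) <= M * weight k j) -> Lambda sigma k a.
Proof. by move=> k0 aM; exists M => j; rewrite wq_leE. Qed.

Lemma wq_le_Lnorm_k k a j : Lambda sigma k a -> wq sigma k a j <= Lnorm_k sigma k a.
Proof. by move=> [M aM]; apply: ub_le_sup; [exists M => _ [i _ <-] | exists j]. Qed.

Lemma cabs_le_Lnorm_k k a j : (0 < k)%N -> Lambda sigma k a ->
  cabs (a j) <= Lnorm_k sigma k a * weight k j.
Proof. by move=> k0 aL; rewrite -wq_leE //; exact: wq_le_Lnorm_k. Qed.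

Lemma Lnorm_k_le k a M : (forall j, wq sigma k a j <= M) -> Lnorm_k sigma k a <= M.
Proof.
by move=> aM; apply: ge_sup; [exists (wq sigma k a 0); exists 0%N | move=> _ [i _ <-]].
Qed.

Lemma Lnorm_k_ge0 k a : Lambda sigma k a -> 0 <= Lnorm_k sigma k a.
Proof. by move=> aL; exact: le_trans (wq_ge0 k a 0) (wq_le_Lnorm_k 0 aL). Qed.

Lemma LambdaB k a c : (0 < k)%N ->
  Lambda sigma k a -> Lambda sigma k c -> Lambda sigma k (a - c).
Proof.
move=> k0 aL cL.
apply: (@Lambda_cabs_le _ _ (2 * Lnorm_k sigma k a + 2 * Lnorm_k sigma k c)) => // j.
apply: le_trans (cabsB_le (a j) (c j)) _.
have := cabs_le_Lnorm_k j k0 aL; have := cabs_le_Lnorm_k j k0 cL.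
have := weight_gt0 j k0; nra.
Qed.

Lemma Lnorm_k_cvg0 k (d : nat -> nat -> R[i]) :
  (forall e, 0 < e -> \forall n \near \oo, forall j, wq sigma k (d n) j <= e) ->
  Lnorm_k sigma k (d n) @[n --> \oo] --> 0.
Proof.
move=> dsmall; apply/cvgrPdist_le => e e0; apply: filterS (dsmall e e0) => n dn.
rewrite sub0r normrN ger0_norm; first exact: Lnorm_k_le.
by apply: Lnorm_k_ge0; exists e.
Qed.

Lemma Lnorm_k_cvg0_rate k C (d : nat -> nat -> R[i]) :
  (forall m j, wq sigma k (d m) j <= C / m.+1%:R) ->
  Lnorm_k sigma k (d m) @[m --> \oo] --> 0.
Proof.
move=> d_le; apply: Lnorm_k_cvg0 => e e0.
exists (Num.truncn (C / e)) => // m /= Nm j.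
apply: le_trans (d_le m j) _.
have := truncnS_gt (C / e); rewrite ltr_pdivrMr // => trunc_gt.
have : (Num.truncn (C / e)).+1%:R <= m.+1%:R :> R by rewrite ler_nat ltnS.
rewrite ler_pdivrMr ?ltr0n //; nra.
Qed.

Lemma complete_Lambda k : (0 < k)%N -> complete_in (Lambda sigma k) (Lnorm_k sigma k).
Proof.
move=> k0 u uL u_cauchy.
have reim_dist n m i :
    `|reim (u n) i - reim (u m) i| <= Lnorm_k sigma k (u n - u m) * weight k i.1.
  rewrite -reimB; apply: le_trans (reim_le_cabs _ _) _.
  exact: cabs_le_Lnorm_k _ k0 (LambdaB k0 (uL n) (uL m)).
have reim_cvg i : cvg (reim (u n) i @[n --> \oo]).
  apply: cauchy_cvg; apply: cauchy_exP => e e0.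
  have [n0 n0_cauchy] := u_cauchy _ (divr_gt0 e0 (weight_gt0 i.1 k0)).
  exists (reim (u n0) i); exists n0 => // n /= n0n.
  rewrite -ball_normE /=; apply: le_lt_trans (reim_dist _ _ _) _.
  by rewrite -ltr_pdivlMr ?weight_gt0 // n0_cauchy.
pose b := of_reim (fun i => lim (reim (u n) i @[n --> \oo])).
have u_near_b e : 0 < e ->
    \forall n \near \oo, forall j, cabs (u n j - b j) <= (e + e) * weight k j.
  move=> e0; have [n0 n0_cauchy] := u_cauchy e e0; exists n0 => // n /= n0n j.
  apply: le_trans (cabs_sub_of_reim_le _ _ _) _; rewrite mulrDl.
  suff reim_le i : `|reim (u n) i - lim (reim (u m) i @[m --> \oo])| <= e * weight k i.1.
    exact: lerD (reim_le (j, true)) (reim_le (j, false)).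
  apply: (ler_cvg_to (cvg_norm (cvgB (cvg_cst (reim (u n) i)) (reim_cvg i))) (cvg_cst _)).
  exists n0 => // m /= n0m; apply: le_trans (reim_dist _ _ _) _.
  by rewrite ler_wpM2r ?ltW ?weight_gt0 ?n0_cauchy.
exists b.
  have /filter_ex [n un_b] := u_near_b 1 ltr01.
  have -> : b = u n - (u n - b) by rewrite opprB addrC subrK.
  exact: (LambdaB k0 (uL n) (Lambda_cabs_le k0 un_b)).
apply: Lnorm_k_cvg0 => e e0.
apply: filterS (u_near_b (e / 2) (divr_gt0 e0 (ltr0Sn R 1))) => n un_b j.
by rewrite wq_leE // [e]splitr; exact: un_b.
Qed.

End weighted_sequences.

Lemma leq_Bernoulli (k j : nat) : (k ^ j * (k + j) <= k * k.+1 ^ j)%N.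
Proof.
elim: j => [|j IH]; first by rewrite !expn0 addn0 mul1n muln1.
have kSj : (k ^ j <= k.+1 ^ j)%N by case: (j) => [|i]; rewrite ?expn0 ?leq_exp2r.
rewrite !expnS; nia.
Qed.

Section pre_weight_sequences.
Variables (R : realType) (sigma : R -> R).
Hypothesis sigma_pw : pre_weight sigma.

Lemma phistar_has_ubound x : 0 <= x ->
  has_ubound [set x * y - sigma (expR y) | y in [set y : R | 0 <= y]].
Proof.
case: sigma_pw => _ [sigma_ge0 [_ [_ [sigma_cvg [ln_sigma_cvg _]]]]] x0.
have e0 : 0 < (x + 1)^-1 by rewrite invr_gt0 ltr_wpDl.
move/cvgryPgt: sigma_cvg => sigma_gt; move/cvgr_dist_lt: ln_sigma_cvg => ln_sigma_lt.
have [M [_ hM]] := filterI (sigma_gt 0) (ln_sigma_lt _ e0).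
have M1 : 1 <= Num.max M 1 by rewrite le_max lexx orbT.
exists (x * ln (Num.max M 1)) => _ [y /= y0 <-].
have sge0 : 0 <= sigma (expR y) by apply: sigma_ge0; exact: expR_ge0.
have lnge0 : 0 <= ln (Num.max M 1) by apply: ln_ge0.
have [My|yM] := ltP M (expR y).
  have [sp hl] := hM _ My.
  rewrite sub0r normrN expRK ger0_norm ?divr_ge0 // ltr_pdivrMr // in hl.
  have : y * (x + 1) < sigma (expR y) by rewrite -ltr_pdivlMr ?ltr_wpDl // mulrC.
  by move=> ?; apply: le_trans (_ : 0 <= _); [nra | rewrite mulr_ge0].
have yl : y <= ln (Num.max M 1).
  rewrite -[leLHS]expRK ler_ln ?posrE ?expR_gt0 ?(lt_le_trans ltr01) //.
  by apply: le_trans yM _; rewrite le_max lexx.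
nra.
Qed.

Lemma Sw_le x x' j : 0 < x -> x <= x' -> Sw sigma x j <= Sw sigma x' j.
Proof.
move=> x0 xx'; have x'0 := lt_le_trans x0 xx'.
have sigma_ge0 := proj1 (proj2 sigma_pw).
rewrite ler_expR mulrC ler_pdivrMr //.
apply: ge_sup; first by eexists; exists 0 => /=.
move=> _ [y /= y0 <-].
have := ub_le_sup (phistar_has_ubound (mulr_ge0 (ltW x'0) (ler0n R j)))
  (ex_intro2 _ _ y y0 erefl).
rewrite -/(phistar sigma (x' * j%:R)); set P := phistar _ _; set s := sigma _ => le_P.
have s0 : 0 <= s by apply: sigma_ge0; exact: expR_ge0.
have x'V0 : 0 <= x'^-1 by rewrite invr_ge0 ltW.
have := ler_wpM2l (mulr_ge0 (ltW x0) x'V0) le_P.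
have -> : x * x'^-1 * (x' * j%:R * y - s) = x * j%:R * y - x * x'^-1 * s.
  by field; rewrite gt_eqF.
have : x * x'^-1 * s <= s by rewrite ler_piMl // ler_pdivrMr // mul1r.
rewrite [x'^-1 * P * x]mulrC mulrA; lra.
Qed.

Lemma weight_leS k j : (0 < k)%N -> weight sigma k j <= weight sigma k.+1 j.
Proof.
move=> k0; apply: ler_pM; rewrite ?exprn_ge0 ?expR_ge0 //.
- by rewrite lerXn2r ?nnegrE // ler_nat.
- by rewrite Sw_le ?ltr0n ?ler_nat.
Qed.

Lemma weight_mulD_le k j : (0 < k)%N ->
  weight sigma k j * (k + j)%:R <= k%:R * weight sigma k.+1 j.
Proof.
move=> k0; rewrite /weight mulrAC mulrA; apply: ler_pM.
- by rewrite mulr_ge0 ?exprn_ge0.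
- exact: expR_ge0.
- by rewrite -!natrX -!natrM ler_nat leq_Bernoulli.
- by rewrite Sw_le ?ltr0n ?ler_nat.
Qed.

Lemma Lambda_subS k : (0 < k)%N -> Lambda sigma k `<=` Lambda sigma k.+1.
Proof.
move=> k0 a [M aM]; apply: (@Lambda_cabs_le _ _ _ _ M) => // j.
have M0 : 0 <= M := le_trans (wq_ge0 sigma k a j) (aM j).
by apply: le_trans (_ : M * weight sigma k j <= _); rewrite -?wq_leE ?ler_wpM2l ?weight_leS.
Qed.

Lemma wq_le_head_tail k m c (d : nat -> R[i]) : (0 < k)%N -> 0 <= c ->
  (forall j, (j <= m)%N -> cabs (d j) <= c * weight sigma k.+1 j / m.+1%:R) ->
  (forall j, cabs (d j) <= c * weight sigma k j) ->
  forall j, wq sigma k.+1 d j <= c * k%:R / m.+1%:R.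
Proof.
move=> k0 c0 head tail j; rewrite wq_leE //.
have w1_ge0 := ltW (weight_gt0 sigma j (ltn0Sn k)).
have k1 : 1 <= k%:R :> R by rewrite ler1n.
have m0 : 0 < m.+1%:R :> R by rewrite ltr0n.
rewrite mulrAC ler_pdivlMr //.
have [jm|mj] := leqP j m.
  move: (head j jm) (mulr_ge0 c0 w1_ge0); rewrite ler_pdivlMr //; nra.
have w_ratio := weight_mulD_le j k0.
have kjm : m.+1%:R <= (k + j)%:R :> R by rewrite ler_nat; lia.
have w0_ge0 := ltW (weight_gt0 sigma j k0).
apply: le_trans (ler_wpM2r (ltW m0) (tail j)) _.
apply: le_trans (ler_wpM2l (mulr_ge0 c0 w0_ge0) kjm) _.
by rewrite -mulrA -[c * k%:R * _]mulrA ler_wpM2l.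
Qed.

Lemma compact_inclusion_Lambda k : (0 < k)%N ->
  compact_inclusion (Lambda sigma k) (Lambda sigma k.+1)
                    (Lnorm_k sigma k) (Lnorm_k sigma k.+1).
Proof.
move=> k0; split; first exact: Lambda_subS.
move=> u u_ball.
have u_le n j : cabs (u n j) <= weight sigma k j.
  have [uL u1] := u_ball n; apply: le_trans (cabs_le_Lnorm_k j k0 uL) _.
  by rewrite ler_piMl // ltW ?weight_gt0.
have [phi phi_incr [c c_le c_near]] := dominated_subseq_reim_near u_le
  (fun j => weight_gt0 sigma j (ltn0Sn k)).
exists phi; split => //; exists (of_reim c).
  apply: (@Lambda_cabs_le _ _ _ _ 2) => // j.
  apply: le_trans (cabs_of_reim_le _ _) _.
  have := c_le (j, true); have := c_le (j, false); have := weight_leS j k0; lra.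
apply: (@Lnorm_k_cvg0_rate _ _ _ (4 * k%:R)) => m.
apply: (wq_le_head_tail (c := 4)) => // j => [jm|];
  apply: le_trans (cabs_sub_of_reim_le _ _ _) _.
  apply: le_trans (lerD (c_near m j true jm) (c_near m j false jm)) _.
  have X0 : 0 <= weight sigma k.+1 j / m.+1%:R by rewrite ltW // divr_gt0 ?weight_gt0.
  rewrite -mulrA; move: X0; set X := weight sigma k.+1 j / m.+1%:R; lra.
have := c_le (j, true); have := c_le (j, false).
have := reim_le_cabs (u (phi m)) (j, true); have := reim_le_cabs (u (phi m)) (j, false).
have := u_le (phi m) j.
have := ler_normB (reim (u (phi m)) (j, true)) (c (j, true)).
have := ler_normB (reim (u (phi m)) (j, false)) (c (j, false)).
rewrite /=; lra.
Qed.

End pre_weight_sequences.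

Theorem lemmaA2 (R : realType) (sigma : R -> R) :
  pre_weight sigma ->
  (forall k : nat, (1 <= k)%N ->
     compact_inclusion (Lambda sigma k) (Lambda sigma k.+1)
                       (Lnorm_k sigma k) (Lnorm_k sigma k.+1)) /\
  DFS_spectrum (Lambda sigma) (Lnorm_k sigma).
Proof.
move=> sigma_pw; have incl k := @compact_inclusion_Lambda R sigma sigma_pw k.
by split=> // k k1; split; [exact: complete_Lambda | exact: incl].
Qed.
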